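(* Let $J>h>0$ and $\sigma\in\mathcal X$. (i) If some cluster or plus strip of $\sigma$ has an internal angle $\frac53\pi$ or an internal angle $\frac13\pi$, then $V_\sigma=0$; in particular $\sigma\notin\mathcal X_0$. (ii) If some cluster or plus strip of $\sigma$ has an internal angle $\frac43\pi$, then $V_\sigma\le J-h$; in particular $\sigma\notin\mathcal X_{J-h}$.
   Context: Let $\mathbb{T}^2$ denote the triangular lattice embedded in $\mathbb{R}^2$ and $\mathbb{H}^2$ its dual, the hexagonal lattice; each vertex $i$ of $\mathbb{H}^2$ is the centre of a unique closed triangular face of $\mathbb{T}^2$ (the face centred at $i$), and $d$ denotes the graph distance on $\mathbb{H}^2$, so $d(i,j)=1$ iff the faces centred at $i$ and $j$ share an edge. Fix an integer $L\ge1$ and let $\Lambda\subset\mathbb{H}^2$ be the set of sites in a parallelogram of side length $L$ cut along two coordinate axes of $\mathbb{T}^2$, with periodic boundary conditions; thus $\Lambda$ is a discrete torus with $|\Lambda|=2L^2$ sites, each having 3 nearest neighbours. Let $\mathcal X=\{-1,+1\}^\Lambda$ and let $\underline{+1}$, $\underline{-1}$ be the configurations with all spins $+1$, resp. $-1$. For $J,h>0$ the Hamiltonian is $H(\sigma)=-\frac J2\sum_{\{i,j\}\subset\Lambda:\,d(i,j)=1}\sigma(i)\sigma(j)-\frac h2\sum_{i\in\Lambda}\sigma(i)$ (sum over unordered nearest-neighbour pairs), so that $H(\sigma)-H(\underline{-1})=J|\gamma(\sigma)|-hN^+(\sigma)$, where $|\gamma(\sigma)|$ is the number of nearest-neighbour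 pairs carrying opposite spins and $N^+(\sigma)$ is the number of sites with spin $+1$. For $x\in\Lambda$, $\sigma^{(x)}$ denotes $\sigma$ with the spin at $x$ reversed. Metastability notions: a path is a finite sequence $(\omega_1,\dots,\omega_n)$ in $\mathcal X$ with each $\omega_{k+1}=\omega_k^{(x)}$ for some $x\in\Lambda$; $\Theta(\sigma,\eta)$ is the set of paths from $\sigma$ to $\eta$; $\Phi(\sigma,\eta)=\min_{\omega\in\Theta(\sigma,\eta)}\max_{\zeta\in\omega}H(\zeta)$ and $\Phi(A,B)=\min_{\sigma\in A,\eta\in B}\Phi(\sigma,\eta)$. $\mathcal I_\sigma=\{\eta: H(\eta)<H(\sigma)\}$; the stability level is $V_\sigma=\Phi(\sigma,\mathcal I_\sigma)-H(\sigma)$ ($V_\sigma=\infty$ if $\mathcal I_\sigma=\emptyset$); $\mathcal X_V=\{\sigma\in\mathcal X: V_\sigma>V\}$. Clusters: for $\sigma\in\mathcal X$ let $C(\sigma)$ be the union (on the torus) of the closed faces centred at the sites $i$ with $\sigma(i)=+1$. A maximal connected component of $C(\sigma)$ is called a plus strip if it wraps around the torus and a cluster otherwise. A cluster or plus strip $C$ has an internal angle $k\pi/3$ ($k\in\{1,\dots,5\}$) at a vertex $v$ of $\mathbb T^2$ if exactly $k$ of the six faces of $\mathbb T^2$ incident to $v$ belong to $C$ and these $k$ faces are consecutive in the cyclic order around $v$. *)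

From HB Require Import structures.
From mathcomp Require Import all_boot all_order all_algebra.
From mathcomp Require Import fingraph.
Set Implicit Arguments. Unset Strict Implicit. Unset Printing Implicit Defensive.
Import Order.TTheory GRing.Theory Num.Theory.
Local Open Scope ring_scope.

(* The torus has side length L = n.+1 (so L >= 1).  Coordinates live in
   'I_n.+1 = Z/LZ with its canonical Z-module structure.                *)

Definition inc {n} (a : 'I_n.+1) : 'I_n.+1 := (a + inZp 1)%R.
Definition dec {n} (a : 'I_n.+1) : 'I_n.+1 := (a - inZp 1)%R.

(* vertices of the triangular lattice T^2 on the torus: a e1 + b e2,
   e1 = (1,0), e2 = (1/2, sqrt3/2). *)
Definition vtx (n : nat) := ('I_n.+1 * 'I_n.+1)%type.

(* sites of Lambda = triangular faces:
   (a,b,true)  = up face   U(a,b) with vertices (a,b),(a+1,b),(a,b+1)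
   (a,b,false) = down face D(a,b) with vertices (a+1,b),(a,b+1),(a+1,b+1) *)
Definition site (n : nat) := ('I_n.+1 * 'I_n.+1 * bool)%type.

(* edges of T^2 on the torus: (a,b,0) = [(a,b),(a+1,b)],
   (a,b,1) = [(a,b),(a,b+1)], (a,b,2) = [(a+1,b),(a,b+1)] *)
Definition edge (n : nat) := ('I_n.+1 * 'I_n.+1 * 'I_3)%type.

Definition e0 : 'I_3 := @Ordinal 3 0 isT.
Definition e1 : 'I_3 := @Ordinal 3 1 isT.
Definition e2 : 'I_3 := @Ordinal 3 2 isT.

Definition face_edges {n} (i : site n) : {set edge n} :=
  let: (a, b, up) := i in
  if up then [set (a, b, e0); (a, b, e1); (a, b, e2)]
  else [set (a, b, e2); (a, inc b, e0); (inc a, b, e1)].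

Definition face_verts {n} (i : site n) : {set vtx n} :=
  let: (a, b, up) := i in
  if up then [set (a, b); (inc a, b); (a, inc b)]
  else [set (inc a, b); (a, inc b); (inc a, inc b)].

(* d(i,j) = 1 : the faces centred at i and j share an edge *)
Definition nn {n} (i j : site n) : bool :=
  (i != j) && (face_edges i :&: face_edges j != set0).

Definition nnpair {n} (e : {set site n}) : bool :=
  [exists i, exists j, nn i j && (e == [set i; j])].

(* configurations: true = spin +1, false = spin -1 *)
Definition config (n : nat) := {ffun site n -> bool}.

Definition spin {R : realFieldType} {n} (s : config n) (i : site n) : R :=
  if s i then 1 else -1.

Definition Ham {R : realFieldType} {n} (J h : R) (s : config n) : R :=
  - (J / 2) * (\sum_(e : {set site n} | nnpair e) \prod_(i in e) spin s i)
  - (h / 2) * (\sum_(i : site n) spin s i).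

Definition flip {n} (s : config n) (x : site n) : config n :=
  [ffun y => if y == x then ~~ s y else s y].

Definition step {n} (s t : config n) : bool := [exists x, t == flip s x].

Definition reach_below {R : realFieldType} {n} (J h c : R) (s t : config n) : bool :=
  (Ham J h s <= c) &&
  connect [rel a b | step a b && (Ham J h b <= c)] s t.

(* minimum of a (nonempty) finite list of reals *)
Definition seqmin {R : realFieldType} (l : seq R) : R :=
  foldr Num.min (head 0 l) l.

(* Phi(s,t) = min over paths from s to t of the max energy along the path;
   this max always is one of the finitely many values Ham z. *)
Definition Phi {R : realFieldType} {n} (J h : R) (s t : config n) : R :=
  seqmin [seq Ham J h z | z <- enum [pred z : config n | reach_below J h (Ham J h z) s t]].

Definition PhiSet {R : realFieldType} {n} (J h : R) (s : config n)
  (A : {set config n}) : R :=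
  seqmin [seq Phi J h s t | t <- enum A].

Definition Iset {R : realFieldType} {n} (J h : R) (s : config n) : {set config n} :=
  [set t | Ham J h t < Ham J h s].

(* stability level; None stands for +infinity *)
Definition Vstab {R : realFieldType} {n} (J h : R) (s : config n) : option R :=
  if Iset J h s == set0 then None
  else Some (PhiSet J h s (Iset J h s) - Ham J h s).

Definition Xlev {R : realFieldType} {n} (J h V : R) : {set config n} :=
  [set s | if Vstab J h s is Some v then V < v else true].

(* Clusters / plus strips: maximal connected components of the union of the
   closed plus faces.  Two closed faces intersect iff they share a vertex. *)
Definition touch {n} (i j : site n) : bool := face_verts i :&: face_verts j != set0.

Definition comp {n} (s : config n) (i : site n) : {set site n} :=
  [set j | s i && s j && connect [rel a b | s a && s b && touch a b] i j].

(* the six faces incident to vertex v=(a,b), in counterclockwise order *)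
Definition around {n} (v : vtx n) (p : 'I_6) : site n :=
  let: (a, b) := v in
  nth (a, b, true)
    [:: (a, b, true); (dec a, b, false); (dec a, b, true);
        (dec a, dec b, false); (a, dec b, true); (a, dec b, false)] p.

(* C has internal angle k*pi/3 at v: exactly k of the six incident faces
   belong to C and they are cyclically consecutive. *)
Definition has_angle {n} (C : {set site n}) (v : vtx n) (k : nat) : bool :=
  (#|[set p : 'I_6 | around v p \in C]| == k) &&
  [exists st : 'I_6,
     [set p : 'I_6 | around v p \in C] == [set p : 'I_6 | ((p + 6 - st) %% 6 < k)%N]].

Definition is_component {n} (s : config n) (C : {set site n}) : Prop :=
  exists i, s i /\ C = comp s i.

(* Let J > h > 0.  Flipping one spin x changes the energy by
   spin(x) * (J * F(x) + h), where the local field F(x) is the sum of the spins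
   of the (at most three) nearest neighbours of x.  Around a vertex v of the
   triangular lattice the six incident faces form a fan in which consecutive
   faces are nearest neighbours, and faces of a cluster only touch minus faces
   from outside.  Hence:
   - angle 5pi/3: the missing face of the fan is minus with two plus
     neighbours; flipping it lowers the energy by at least J + h;
   - angle pi/3: the single face of the fan is plus with two minus neighbours;
     flipping it lowers the energy by at least J - h;
   - angle 4pi/3: flipping the first missing face costs at most J - h, after
     which the second missing face has two plus neighbours and flipping it
     lowers the energy by J + h, ending strictly below the start.
   A downhill flip gives stability level 0; a two-flip path whose highest
   point is at most J - h above the start gives stability level <= J - h. *)
From Pilot Require Import Defs.
From HB Require Import structures.
From mathcomp Require Import all_boot all_order all_algebra fingraph ring lra.
Import Order.TTheory GRing.Theory Num.Theory.
Local Open Scope ring_scope.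

Section SeqMin.
Variable R : realFieldType.
Implicit Types (l : seq R) (c y : R).

Lemma seqmin_le l y : y \in l -> seqmin l <= y.
Proof.
rewrite /seqmin; elim: l (head 0 l) => //= a l IH x0.
by rewrite inE ge_min => /orP [/eqP ->|/IH ->]; rewrite ?lexx ?orbT.
Qed.

Lemma seqmin_ge l c : l != [::] -> {in l, forall y, c <= y} -> c <= seqmin l.
Proof.
case: l => // a l _ lb; rewrite /seqmin [head _ _]/=.
have : c <= a by apply: lb; rewrite inE eqxx.
elim: (a :: l) lb => //= b l' IH lb ca.
by rewrite le_min lb ?inE ?eqxx // IH // => y ly; apply: lb; rewrite inE ly orbT.
Qed.
End SeqMin.

Section FlipGraph.
Context {n : nat}.
Implicit Types (s t : config n) (x y : site n).

Lemma flipE s x y : flip s x y = if y == x then ~~ s y else s y.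
Proof. by rewrite /flip ffunE. Qed.

(* Any relation containing all single spin flips connects every pair of
   configurations: flip, one at a time, the sites where s and t disagree. *)
Lemma connect_flips (e : rel (config n)) :
  (forall s x, e s (flip s x)) -> forall s t, connect e s t.
Proof.
move=> e_flip s t.
have agree s' : [set x | s' x != t x] = set0 -> s' = t.
  move=> diff0; apply/ffunP => x; apply/eqP/negPn.
  by move/setP: diff0 => /(_ x); rewrite !inE => ->.
move: {2}#|_| (leqnn #|[set x | s x != t x]|) => k; elim: k s => [|k IH] s.
  by rewrite leqn0 cards_eq0 => /eqP /agree ->; apply: connect0.
case: (set_0Vmem [set x | s x != t x]) => [/agree -> _|[x dx] dk]; first exact: connect0.
apply: connect_trans (connect1 (e_flip s x)) (IH _ _).
have -> : [set y | flip s x y != t y] = [set y | s y != t y] :\ x.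
  apply/setP => y; rewrite !inE flipE; case: (eqVneq y x) => [->|//].
  by move: dx; rewrite inE; case: (s x); case: (t x).
by rewrite (cardsD1 x) dx in dk.
Qed.
End FlipGraph.

Section FlipEnergy.
Context {R : realFieldType} {n : nat}.
Implicit Types (s : config n) (x y : site n) (e : {set site n}).

Lemma nnC x y : nn x y = nn y x.
Proof. by rewrite /nn eq_sym setIC. Qed.

Lemma nn_neq {x y} : nn x y -> x != y.
Proof. by case/andP. Qed.

Definition local_field s x : R := \sum_(j | nn x j) spin s j.

Definition bond s e : R := \prod_(i in e) spin s i.

Lemma spin_flip s x y :
  spin (flip s x) y = (if y == x then - spin s y else spin s y) :> R.
Proof. by rewrite /spin flipE; case: eqP; case: (s y); rewrite ?opprK. Qed.

Lemma sum_spin_flip s x :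
  \sum_i spin (flip s x) i = \sum_i spin s i - 2 * spin s x :> R.
Proof.
rewrite (bigD1 x) //= [in RHS](bigD1 x) //= spin_flip eqxx.
under eq_bigr => i /negbTE ix do rewrite spin_flip ix.
by rewrite mulr2n; ring.
Qed.

Lemma bond_flip s x e : bond (flip s x) e = if x \in e then - bond s e else bond s e.
Proof.
rewrite /bond; case: ifP => xe.
  rewrite (bigD1 x) // [in RHS](bigD1 x) //= spin_flip eqxx mulNr.
  by congr (- (_ * _)); apply: eq_bigr => i /andP [_ /negbTE ix]; rewrite spin_flip ix.
by apply: eq_bigr => i ie; rewrite spin_flip; case: eqP ie xe => // -> ->.
Qed.

Lemma sum_bonds_flip s x :
  \sum_(e | nnpair e) bond (flip s x) e =
  \sum_(e | nnpair e) bond s e - 2 * \sum_(e | nnpair e && (x \in e)) bond s e.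
Proof.
rewrite !(bigID (fun e : {set site n} => x \in e) (fun e => nnpair e)) /=.
under eq_bigr => e /andP [_ xe] do rewrite bond_flip xe.
under [X in _ + X]eq_bigr => e /andP [_ /negbTE xe] do rewrite bond_flip xe.
by rewrite sumrN mulr2n; ring.
Qed.

(* The bonds at x are the pairs {x, j} with j a neighbour of x. *)
Lemma bonds_at s x :
  \sum_(e | nnpair e && (x \in e)) bond s e = spin s x * local_field s x.
Proof.
have inj : {in [set j | nn x j] &, injective (fun j => [set x; j])}.
  move=> j j'; rewrite !inE => xj _ E.
  have : j \in [set x; j'] by rewrite -E !inE eqxx orbT.
  by rewrite !inE eq_sym (negbTE (nn_neq xj)) => /eqP.
rewrite (eq_bigl (mem [set [set x; j] | j in [set j | nn x j]])); last first.
  move=> e; apply/andP/imsetP => /=.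
    case=> /existsP [i /existsP [j /andP [ij /eqP ->]]] /set2P [] ->.
      by exists j; rewrite ?inE.
    by exists i; [rewrite inE nnC | apply/setP => y; rewrite !inE orbC].
  case=> j; rewrite inE => xj ->; split; last by rewrite !inE eqxx.
  by apply/existsP; exists x; apply/existsP; exists j; rewrite xj eqxx.
rewrite big_imset //= /local_field mulr_sumr; apply: eq_big => j; first by rewrite inE.
by rewrite inE => /nn_neq xj; rewrite /bond big_setU1 ?big_set1 // inE.
Qed.

Lemma ham_flip (J h : R) s x :
  Ham J h (flip s x) = Ham J h s + spin s x * (J * local_field s x + h).
Proof.
rewrite /Ham sum_spin_flip.
have := sum_bonds_flip s x; rewrite /bond => ->.
have := bonds_at s x; rewrite /bond => ->.
by rewrite mulr2n; field.
Qed.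
End FlipEnergy.

Section Neighbours.
Context {n : nat}.
Implicit Types (x y : site n) (a : 'I_n.+1).

Lemma inc_dec a : dec (inc a) = a. Proof. by rewrite /dec /inc addrK. Qed.
Lemma dec_inc a : inc (dec a) = a. Proof. by rewrite /dec /inc subrK. Qed.

Definition up_face (e : edge n) : site n := let: (c, d, _) := e in (c, d, true).
Definition down_face (e : edge n) : site n := let: (c, d, k) := e in
  if k == e0 then (c, dec d, false) else if k == e1 then (dec c, d, false)
  else (c, d, false).

Lemma faces_of_edge {e : edge n} {x} : e \in face_edges x -> x = up_face e \/ x = down_face e.
Proof.
case: x => [[a b] []] /=; rewrite !inE -!orbA => /or3P [] /eqP -> /=; auto.
all: by right; rewrite inc_dec.
Qed.

Lemma card_face_edges x : (#|face_edges x| <= 3)%N.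
Proof.
have card3 (T : finType) (u v w : T) : (#|[set u; v; w]| <= 3)%N.
  by apply: leq_trans (leq_card_setU _ _) _; rewrite cards1 cards2; case: (u != v).
by case: x => [[a b] []]; apply: card3.
Qed.

Definition nbrs x := [set j | nn x j].

(* Every site has at most three nearest neighbours: choosing for each
   neighbour a common edge is injective into the three edges of x. *)
Lemma card_nbrs x : (#|nbrs x| <= 3)%N.
Proof.
pose f j := odflt (ord0, ord0, e0) [pick e in face_edges x :&: face_edges j].
have fP j : j \in nbrs x -> f j \in face_edges x :&: face_edges j.
  rewrite inE => /andP [_ /set0Pn [e he]]; rewrite /f.
  by case: pickP => [//|/(_ e)]; rewrite he.
have f_inj : {in nbrs x &, injective f}.
  move=> j j' jx j'x E; have := fP j jx; have := fP j' j'x; rewrite -E !inE.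
  move: (f j) => e /andP [_ ej'] /andP [ex ej].
  have [jnx j'nx] : j != x /\ j' != x.
    by move: jx j'x; rewrite !inE => /nn_neq; rewrite eq_sym => -> /nn_neq; rewrite eq_sym.
  move: jnx j'nx; case: (faces_of_edge ex) => ->;
    case: (faces_of_edge ej) => ->; case: (faces_of_edge ej') => -> //;
    by rewrite eqxx.
rewrite -(card_in_imset f_inj); apply: leq_trans (card_face_edges x).
apply: subset_leq_card; apply/subsetP => e /imsetP [j jx ->].
by have := fP j jx; rewrite inE => /andP [].
Qed.
End Neighbours.

Section LocalField.
Context {R : realFieldType}.

Lemma sum_ge_pm1 {T : finType} (f : T -> R) {B P : {set T}} :
  P \subset B -> {in P, forall j, f j = 1} -> (forall j, -1 <= f j) ->
  2 * #|P|%:R - #|B|%:R <= \sum_(j in B) f j.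
Proof.
move=> PB fP fge.
rewrite (big_setID P) /= (setIidPr PB) (eq_bigr (fun=> 1)) // sumr_const.
have -> : #|B|%:R = #|P|%:R + #|B :\: P|%:R :> R.
  by rewrite -natrD -(cardsID P B) (setIidPr PB).
have : - #|B :\: P|%:R <= \sum_(j in B :\: P) f j :> R.
  by rewrite -sumr_const -sumrN; apply: ler_sum => j _.
lra.
Qed.

Context {n : nat}.
Implicit Types (s : config n) (x : site n).

Lemma spin_ge s x : -1 <= spin s x :> R.
Proof. by rewrite /spin; case: (s x); lra. Qed.

Lemma spin_le s x : spin s x <= 1 :> R.
Proof. by rewrite /spin; case: (s x); lra. Qed.

Lemma local_field_nbrs s x : local_field s x = \sum_(j in nbrs x) spin s j :> R.
Proof. by apply: eq_bigl => j; rewrite inE. Qed.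

Lemma local_field_plus s x (P : {set site n}) :
  P \subset nbrs x -> {in P, forall j, s j} -> 2 * #|P|%:R - 3 <= local_field s x :> R.
Proof.
move=> Px sP; rewrite local_field_nbrs.
have spinP : {in P, forall j, spin s j = 1 :> R} by move=> j jP; rewrite /spin (sP j jP).
have := sum_ge_pm1 (spin s) Px spinP (spin_ge s).
have : #|nbrs x|%:R <= 3 :> R by rewrite ler_nat card_nbrs.
lra.
Qed.

Lemma local_field_minus s x (M : {set site n}) :
  M \subset nbrs x -> {in M, forall j, ~~ s j} -> local_field s x <= 3 - 2 * #|M|%:R :> R.
Proof.
move=> Mx sM; rewrite local_field_nbrs.
have spinM : {in M, forall j, - spin s j = 1 :> R}.
  by move=> j jM; rewrite /spin (negbTE (sM j jM)) opprK.
have nspin_ge j : -1 <= - spin s j :> R by rewrite lerN2 spin_le.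
have := sum_ge_pm1 (fun j => - spin s j) Mx spinM nspin_ge.
have : #|nbrs x|%:R <= 3 :> R by rewrite ler_nat card_nbrs.
rewrite sumrN; lra.
Qed.

Lemma local_field_two_plus {s x a b} : a != b -> nn x a -> nn x b -> s a -> s b ->
  1 <= local_field s x :> R.
Proof.
move=> ab xa xb sa sb.
have := @local_field_plus s x [set a; b]; rewrite cards2 ab.
have -> : 2 * 2%:R - 3 = 1 :> R by lra.
apply; first by apply/subsetP => y; rewrite !inE => /orP [] /eqP ->.
by move=> y; rewrite !inE => /orP [] /eqP ->.
Qed.

Lemma local_field_one_plus {s x a} : nn x a -> s a -> -1 <= local_field s x :> R.
Proof.
move=> xa sa; have := @local_field_plus s x [set a]; rewrite cards1.
have -> : 2 * 1%:R - 3 = -1 :> R by lra.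
apply; first by rewrite sub1set inE.
by move=> y; rewrite inE => /eqP ->.
Qed.

Lemma local_field_two_minus {s x a b} : a != b -> nn x a -> nn x b -> ~~ s a -> ~~ s b ->
  local_field s x <= -1 :> R.
Proof.
move=> ab xa xb sa sb.
have := @local_field_minus s x [set a; b]; rewrite cards2 ab.
have -> : 3 - 2 * 2%:R = -1 :> R by lra.
apply; first by apply/subsetP => y; rewrite !inE => /orP [] /eqP ->.
by move=> y; rewrite !inE => /orP [] /eqP ->.
Qed.
End LocalField.

Section FlipCost.
Context {R : realFieldType} {n : nat} {J : R} (h : R).
Hypothesis J_ge0 : 0 <= J.
Implicit Types (s : config n) (x : site n) (c : R).

Lemma flip_minus_cost {s x c} : ~~ s x -> c <= local_field s x ->
  Ham J h (flip s x) <= Ham J h s - (J * c + h).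
Proof.
move=> sx cF; rewrite ham_flip /spin (negbTE sx) mulN1r lerD2l lerN2 lerD2r.
exact: ler_wpM2l.
Qed.

Lemma flip_plus_cost {s x c} : s x -> local_field s x <= c ->
  Ham J h (flip s x) <= Ham J h s + (J * c + h).
Proof.
move=> sx Fc; rewrite ham_flip /spin sx mul1r lerD2l lerD2r.
exact: ler_wpM2l.
Qed.
End FlipCost.

Section Stability.
Context {R : realFieldType} {n : nat} {J h : R}.
Implicit Types (s t z : config n) (x : site n) (c : R).

Lemma step_flip s x : step s (flip s x).
Proof. by apply/existsP; exists x. Qed.

(* Every path from s starts at s, so its highest energy is at least H(s). *)
Lemma Phi_ge s t : Ham J h s <= Phi J h s t.
Proof.
have [z _ zmax] := @real_arg_maxP R (config n) s predT (Ham J h) isT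
  (fun w _ => num_real (Ham J h w)).
have {}zmax w : Ham J h w <= Ham J h z := zmax w isT.
apply: seqmin_ge => [|y /mapP [w]]; last by rewrite mem_enum inE => /andP [? _] ->.
apply/eqP => /(congr1 (fun l => Ham J h z \in l)); rewrite map_f //.
rewrite mem_enum inE /reach_below zmax //=.
by apply: connect_flips => a x; rewrite /= step_flip zmax.
Qed.

Lemma Phi_le s t z : reach_below J h (Ham J h z) s t -> Phi J h s t <= Ham J h z.
Proof. by move=> st; apply/seqmin_le/map_f; rewrite mem_enum inE. Qed.

Lemma Vstab_le {s t c} : Ham J h t < Ham J h s -> Phi J h s t <= c ->
  exists2 V, Vstab J h s = Some V & V <= c - Ham J h s.
Proof.
move=> ts Pc; have tI : t \in Iset J h s by rewrite inE.
rewrite /Vstab; case: eqP => [I0|_]; first by move: tI; rewrite I0 inE.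
eexists; first reflexivity.
by rewrite lerD2r; apply: le_trans Pc; apply/seqmin_le/map_f; rewrite mem_enum.
Qed.

Lemma Vstab_downhill_flip {s} x : Ham J h (flip s x) < Ham J h s -> Vstab J h s = Some 0.
Proof.
move=> down; have Pss : Phi J h s (flip s x) <= Ham J h s.
  apply: Phi_le; rewrite /reach_below lexx /=.
  by apply: connect1; rewrite /= step_flip ltW.
have [V VE] := Vstab_le down Pss; rewrite subrr => V0; rewrite VE.
congr Some; apply/le_anti; rewrite V0 /=.
move: VE; rewrite /Vstab; case: eqP => // I0 [<-]; rewrite subr_ge0.
apply: seqmin_ge => [|y /mapP [t _ ->]]; last exact: Phi_ge.
apply/eqP => /(congr1 (fun l => Phi J h s (flip s x) \in l)); rewrite map_f //.
by rewrite mem_enum inE.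
Qed.

Lemma Vstab_two_flips {s} x1 x2 {b} : 0 <= b ->
  Ham J h (flip s x1) <= Ham J h s + b ->
  Ham J h (flip (flip s x1) x2) < Ham J h s ->
  exists V, Vstab J h s = Some V /\ V <= b.
Proof.
move=> b0 up down; set s1 := flip s x1 in up down.
have [z [sz s1z zb]] : exists z, [/\ Ham J h s <= Ham J h z, Ham J h s1 <= Ham J h z
    & Ham J h z <= Ham J h s + b].
  case: (leP (Ham J h s1) (Ham J h s)) => [s1s|ss1].
    by exists s; rewrite lexx s1s lerDl b0.
  by exists s1; rewrite lexx up (ltW ss1).
have Pz : Phi J h s (flip s1 x2) <= Ham J h z.
  apply: Phi_le; rewrite /reach_below sz /=.
  apply: (connect_trans (y := s1)); apply: connect1; rewrite /= step_flip //=.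
  by apply: le_trans sz; apply: ltW.
have [V VE Vb] := Vstab_le down Pz; exists V; split => //.
by apply: le_trans Vb _; rewrite lerBlDl.
Qed.
End Stability.

Ltac case6 q := case: q => [[|[|[|[|[|[|//]]]]]] ?].

Section Fan.
Context {n : nat}.
Implicit Types (v : vtx n) (x y : site n) (p q : 'I_6).

Lemma vertex_in_fan v p : v \in face_verts (around v p).
Proof. by case: v => a b; case6 p; rewrite /= !inE ?dec_inc eqxx ?orbT. Qed.

Lemma touch_fan v p q : touch (around v p) (around v q).
Proof. by apply/set0Pn; exists v; rewrite inE !vertex_in_fan. Qed.

Lemma nn_share x y e : x.2 != y.2 -> e \in face_edges x -> e \in face_edges y -> nn x y.
Proof.
move=> xy ex ey; apply/andP; split; first by apply: contraNneq xy => ->.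
by apply/set0Pn; exists e; rewrite inE ex ey.
Qed.

Lemma nn_fan_succ v q : nn (around v q) (around v (q + 1)).
Proof.
case: v => a b; case6 q.
- by apply: (@nn_share _ _ (a, b, e1)); rewrite //= !inE ?dec_inc eqxx ?orbT.
- by apply: (@nn_share _ _ (dec a, b, e2)); rewrite //= !inE ?dec_inc eqxx ?orbT.
- by apply: (@nn_share _ _ (dec a, b, e0)); rewrite //= !inE ?dec_inc eqxx ?orbT.
- by apply: (@nn_share _ _ (a, dec b, e1)); rewrite //= !inE ?dec_inc eqxx ?orbT.
- by apply: (@nn_share _ _ (a, dec b, e2)); rewrite //= !inE ?dec_inc eqxx ?orbT.
- by apply: (@nn_share _ _ (a, b, e0)); rewrite //= !inE ?dec_inc eqxx ?orbT.
Qed.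
End Fan.

Lemma dec_neq m (a : 'I_m.+2) : (dec a == a) = false.
Proof.
apply/negbTE; rewrite /dec -subr_eq0 addrAC subrr sub0r oppr_eq0.
by apply/eqP => /(congr1 val); rewrite /= modn_small.
Qed.

Lemma neq_dec m (a : 'I_m.+2) : (a == dec a) = false.
Proof. by rewrite eq_sym dec_neq. Qed.

(* Two faces of the fan at distance two coincide only on the torus of side 1,
   where the whole fan is 2-periodic. *)
Lemma fan_two_apart {n} (v : vtx n) q :
  around v q = around v (q + 2) -> forall p, around v (p + 2) = around v p.
Proof.
have ord1_eq (x y : 'I_1) : x = y by rewrite (ord1 x) (ord1 y).
case: n v => [|m] [a b] E p.
  by case6 p; rewrite /= ?(ord1_eq (dec a) a) ?(ord1_eq (dec b) b).
by move/eqP: E; case6 q; rewrite /= !xpair_eqE ?dec_neq ?neq_dec ?andbF ?andFb.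
Qed.

Lemma fan_two_apart_from {n} (v : vtx n) st k :
  around v (st + k) = around v (st + (k + 2)) ->
  forall l, around v (st + (l + 2)) = around v (st + l).
Proof. by rewrite addrA => /fan_two_apart per l; rewrite addrA per. Qed.

Lemma nn_fan_from {n} (v : vtx n) st k : nn (around v (st + k)) (around v (st + (k + 1))).
Proof. by rewrite addrA; apply: nn_fan_succ. Qed.

Section Clusters.
Context {n : nat}.
Implicit Types (s : config n) (i j y : site n).

Lemma comp_plus {s i j} : j \in Defs.comp s i -> s j.
Proof. by rewrite inE => /andP [/andP [_ ->]]. Qed.

(* A face touching a cluster from outside is a minus face (maximality). *)
Lemma comp_boundary {s i j y} :
  j \in Defs.comp s i -> y \notin Defs.comp s i -> touch j y -> ~~ s y.
Proof.
rewrite !inE => /andP [/andP [si sj] ij] yC jy; apply/negP => sy.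
move/negP: yC; apply; rewrite si sy /=.
by apply: connect_trans ij (connect1 _); rewrite /= sj sy.
Qed.

Lemma window_offset (st p : 'I_6) : (((st + p)%R + 6 - st) %% 6)%N = p.
Proof. by case6 st; case6 p. Qed.

Lemma angle_window (C : {set site n}) v k : has_angle C v k ->
  exists st : 'I_6, forall p : 'I_6, (around v (st + p) \in C) = (p < k)%N.
Proof.
case/andP => _ /existsP [st /eqP E]; exists st => p.
by move/setP: E => /(_ (st + p)); rewrite !inE window_offset.
Qed.
End Clusters.

Section Angles.
Context {R : realFieldType} {n : nat} {J h : R}.
Context {sigma : config n} {i : site n} {v : vtx n}.
Let C := Defs.comp sigma i.

(* Angle 5pi/3: the missing face of the fan is minus and has two distinct
   plus neighbours in the fan, so flipping it lowers the energy by J + h. *)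
Lemma angle_five_thirds : 0 < h -> h < J -> has_angle C v 5 -> Vstab J h sigma = Some 0.
Proof.
move=> h_gt0 h_lt_J /angle_window [st inC]; pose face k := around v (st + k).
have gap : face 5 \notin C by rewrite /face inC.
have [in4 in0] : face 4 \in C /\ face 0 \in C by rewrite /face !inC.
have gap_minus : ~~ sigma (face 5) := comp_boundary in0 gap (touch_fan _ _ _).
have nn54 : nn (face 5) (face 4) by rewrite nnC; apply: nn_fan_from v st 4.
have nn50 : nn (face 5) (face 0) := nn_fan_from v st 5.
have neq40 : face 4 != face 0.
  by apply/eqP => /fan_two_apart_from per; move: gap; rewrite /face -(per 5) inC.
have field5 : 1 <= local_field sigma (face 5) :> R :=
  local_field_two_plus neq40 nn54 nn50 (comp_plus in4) (comp_plus in0).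
apply: (Vstab_downhill_flip (face 5)).
apply: le_lt_trans (flip_minus_cost h _ gap_minus field5) _; lra.
Qed.

(* Angle pi/3: the only face of the fan in C is plus and has two distinct
   minus neighbours in the fan, so flipping it lowers the energy by J - h. *)
Lemma angle_one_third : 0 < h -> h < J -> has_angle C v 1 -> Vstab J h sigma = Some 0.
Proof.
move=> h_gt0 h_lt_J /angle_window [st inC]; pose face k := around v (st + k).
have in0 : face 0 \in C by rewrite /face inC.
have [out5 out1] : face 5 \notin C /\ face 1 \notin C by rewrite /face !inC.
have minus5 : ~~ sigma (face 5) := comp_boundary in0 out5 (touch_fan _ _ _).
have minus1 : ~~ sigma (face 1) := comp_boundary in0 out1 (touch_fan _ _ _).
have nn05 : nn (face 0) (face 5) by rewrite nnC; apply: nn_fan_from v st 5.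
have nn01 : nn (face 0) (face 1) := nn_fan_from v st 0.
have neq51 : face 5 != face 1.
  by apply/eqP => /fan_two_apart_from per; move: in0; rewrite /face -(per 0) inC.
have field0 : local_field sigma (face 0) <= -1 :> R :=
  local_field_two_minus neq51 nn05 nn01 minus5 minus1.
apply: (Vstab_downhill_flip (face 0)).
apply: le_lt_trans (flip_plus_cost h _ (comp_plus in0) field0) _; lra.
Qed.

(* Angle 4pi/3: flipping the first missing face (one plus neighbour) costs at
   most J - h; it then becomes a plus neighbour of the second missing face,
   which has two distinct plus neighbours and whose flip gains J + h. *)
Lemma angle_four_thirds : 0 < h -> h < J -> has_angle C v 4 ->
  exists V, Vstab J h sigma = Some V /\ V <= J - h.
Proof.
move=> h_gt0 h_lt_J /angle_window [st inC]; pose face k := around v (st + k).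
have [out4 out5] : face 4 \notin C /\ face 5 \notin C by rewrite /face !inC.
have [in3 in0] : face 3 \in C /\ face 0 \in C by rewrite /face !inC.
have minus4 : ~~ sigma (face 4) := comp_boundary in0 out4 (touch_fan _ _ _).
have minus5 : ~~ sigma (face 5) := comp_boundary in0 out5 (touch_fan _ _ _).
have nn43 : nn (face 4) (face 3) by rewrite nnC; apply: nn_fan_from v st 3.
have nn54 : nn (face 5) (face 4) by rewrite nnC; apply: nn_fan_from v st 4.
have nn50 : nn (face 5) (face 0) := nn_fan_from v st 5.
have J_ge0 : 0 <= J by apply/ltW/(lt_trans h_gt0).
pose sigma1 := flip sigma (face 4).
have neq40 : face 4 != face 0 by apply: contraNneq minus4 => ->; apply: comp_plus in0.
have neq54 : face 5 != face 4 := nn_neq nn54.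
have plus4 : sigma1 (face 4) by rewrite flipE eqxx.
have plus0 : sigma1 (face 0) by rewrite flipE eq_sym (negbTE neq40) (comp_plus in0).
have minus5' : ~~ sigma1 (face 5) by rewrite flipE (negbTE neq54).
have field4 : -1 <= local_field sigma (face 4) :> R :=
  local_field_one_plus nn43 (comp_plus in3).
have field5 : 1 <= local_field sigma1 (face 5) :> R :=
  local_field_two_plus neq40 nn54 nn50 plus4 plus0.
have cost1 := flip_minus_cost h J_ge0 minus4 field4.
have cost2 := flip_minus_cost h J_ge0 minus5' field5.
by apply: (Vstab_two_flips (face 4) (face 5)); lra.
Qed.
End Angles.

Theorem lemma4p2 (R : realFieldType) (n : nat) (J h : R) (sigma : config n) :
  0 < h -> h < J ->
  ((exists (C : {set site n}) (v : vtx n),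
      is_component sigma C /\ (has_angle C v 5 \/ has_angle C v 1)) ->
     Vstab J h sigma = Some 0 /\ sigma \notin Xlev J h 0)
  /\
  ((exists (C : {set site n}) (v : vtx n),
      is_component sigma C /\ has_angle C v 4) ->
     (exists V, Vstab J h sigma = Some V /\ V <= J - h)
     /\ sigma \notin Xlev J h (J - h)).
Proof.
move=> h_gt0 h_lt_J; split.
  case=> C [v [[i [_ ->]] angle]].
  have V0 : Vstab J h sigma = Some 0.
    case: angle => angle; first exact: angle_five_thirds h_gt0 h_lt_J angle.
    exact: angle_one_third h_gt0 h_lt_J angle.
  by rewrite inE V0 ltxx.
case=> C [v [[i [_ ->]] /(angle_four_thirds h_gt0 h_lt_J) [V [VE Vle]]]].
by split; [exists V | rewrite inE VE -leNgt].
Qed.
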